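(* Let $\alpha\in(0,1)$, $\beta\in[0,1]$ irrational and $\eta>0$. Then $$\dim_{\mathcal H}\Big(\limsup_{n\to\infty}A_{n,1,\eta}\Big)=0,$$ where $A_{n,1,\eta}=\{x\in[0,1]:\ln(n)\cdot v_{n,1}(x)>\eta\}$ and $\limsup_nA_n=\bigcap_N\bigcup_{n\ge N}A_n$.
   Context: $T_1$ is the Farey map ($T_1(x)=\frac x{1-x}$ for $x\le1/2$, $\frac{1-x}x$ for $x>1/2$) with inverse branches $f_{1,0}(x)=\frac x{1+x}$, $f_{1,1}(x)=\frac1{1+x}$; for $\varphi\in\{0,1\}^n$, $f_{1,\varphi}=f_{1,\varphi_1}\circ\dots\circ f_{1,\varphi_n}$. Itinerary: $\omega_{1,k}(\beta)=0$ if $T_1^{k-1}(\beta)\le1/2$, else $1$; $\omega_1(\beta)|_n=(\omega_{1,1}(\beta),\dots,\omega_{1,n}(\beta))$. With $v_{\beta,\alpha}(x)=|x-\beta|^{-\alpha}$, the $1$-tail is $v_{n,1}(x)=|f_{1,\omega_1(\beta)|_n}'(x)|\cdot v_{\beta,\alpha}(f_{1,\omega_1(\beta)|_n}(x))$. $\dim_{\mathcal H}$ denotes Hausdorff dimension. *)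

From Stdlib Require Import Reals Lra Lia Arith QArith Qreals.
Open Scope R_scope.

Definition T1 (x : R) : R :=
  if Rle_dec x (1/2) then x / (1 - x) else (1 - x) / x.

(** Inverse branches f_{1,0}, f_{1,1} (false = 0, true = 1) *)
Definition f1 (b : bool) (x : R) : R :=
  if b then 1 / (1 + x) else x / (1 + x).

(** Itinerary: omega1 beta k = omega_{1,k}(beta) for k >= 1
    (0 = false if T_1^{k-1}(beta) <= 1/2, else 1 = true). *)
Definition omega1 (beta : R) (k : nat) : bool :=
  if Rle_dec (Nat.iter (k - 1) T1 beta) (1/2) then false else true.

(** fcomp w n = f_{1,w_1} o ... o f_{1,w_n}  (fcomp w 0 = id) *)
Fixpoint fcomp (w : nat -> bool) (n : nat) (x : R) : R :=
  match n with
  | O => x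
  | S m => fcomp w m (f1 (w (S m)) x)
  end.

Definition f_itin (beta : R) (n : nat) : R -> R := fcomp (omega1 beta) n.

(** When f(x) = beta, v_{beta,alpha}(f x) = +infinity, so x belongs to the set. *)
Definition A_set (alpha beta eta : R) (n : nat) (x : R) : Prop :=
  0 <= x <= 1 /\
  (f_itin beta n x = beta \/
   exists d : R, derivable_pt_lim (f_itin beta n) x d /\
     ln (INR n) * (Rabs d * Rpower (Rabs (f_itin beta n x - beta)) (- alpha)) > eta).

Definition limsup_set (A : nat -> R -> Prop) (x : R) : Prop :=
  forall N : nat, exists n : nat, (N <= n)%nat /\ A n x.

(** d is the diameter of U (diameter of the empty set is 0) *)
Definition is_diam (U : R -> Prop) (d : R) : Prop :=
  0 <= d /\
  (forall x y, U x -> U y -> Rabs (x - y) <= d) /\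
  (forall d', 0 <= d' -> (forall x y, U x -> U y -> Rabs (x - y) <= d') -> d <= d').

Definition rpow (d s : R) : R :=
  if Req_EM_T d 0 then (if Req_EM_T s 0 then 1 else 0) else Rpower d s.

Definition hausdorff_null (s : R) (E : R -> Prop) : Prop :=
  forall eps : R, 0 < eps ->
    exists (U : nat -> R -> Prop) (d : nat -> R),
      (forall i, is_diam (U i) (d i)) /\
      (forall x, E x -> exists i, U i x) /\
      (forall N, sum_f_R0 (fun i => rpow (d i) s) N <= eps).

Definition hausdorff_dim_is (E : R -> Prop) (D : R) : Prop :=
  (forall s, 0 <= s -> hausdorff_null s E -> D <= s) /\
  (forall D', (forall s, 0 <= s -> hausdorff_null s E -> D' <= s) -> D' <= D).

Definition irrational (x : R) : Prop := forall q : Q, x <> Q2R q.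

(* A composition f_{1,w} of n inverse branches is a Moebius map x |-> (ax+b)/(cx+d) with
   a, b, c >= 0, d >= 1, c + d >= n + 1 and determinant +-1; along the itinerary of beta it
   sends y_n = T_1^n(beta) to beta.  With t = cx + d and D_n = c y_n + d this gives
     |f'(x)| = t^-2   and   |f(x) - beta| = |x - y_n| / (t D_n).
   For x > 0 outside (y_n/2, 2 y_n) one gets v_{n,1}(x) <= (2/x)^alpha ((n+1)x)^(2 alpha - 2),
   eventually below eta / ln n; so a point of the limsup set lies, for infinitely many n,
   within rho_n = (2^(2-alpha) ln n D_n^(2 alpha - 2) / eta)^(1/alpha) of y_n.
   As D_(n+1) = (1 + y_(n+1)) D_n, the series of y_n D_n^(-e) has bounded partial sums for
   every e > 0, and for a fixed x near y_n and n large, (2 rho_n)^s <= K y_n D_n^(-e) with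
   e = s (1 - alpha) / alpha.  Keeping only the intervals [y_n - rho_n, y_n + rho_n] that
   satisfy this bound gives covers of arbitrarily small s-cost, for every s > 0. *)

From Stdlib Require Import Reals Lra Lia.
From Coquelicot Require Import Coquelicot.
Open Scope R_scope.

Record mobius := Mobius { mob_a : R; mob_b : R; mob_c : R; mob_d : R }.

Definition mob_denom (M : mobius) (x : R) : R := mob_c M * x + mob_d M.

Definition mob_apply (M : mobius) (x : R) : R := (mob_a M * x + mob_b M) / mob_denom M x.

Definition mob_det (M : mobius) : R := mob_a M * mob_d M - mob_b M * mob_c M.

(* Right multiplication by the matrix of [f1 b]: [[0,1],[1,1]] if [b], [[1,0],[1,1]] otherwise. *)
Definition mob_step (b : bool) (M : mobius) : mobius :=
  if b then Mobius (mob_b M) (mob_a M + mob_b M) (mob_d M) (mob_c M + mob_d M)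
  else Mobius (mob_a M + mob_b M) (mob_b M) (mob_c M + mob_d M) (mob_d M).

Fixpoint fcomp_mobius (w : nat -> bool) (n : nat) : mobius :=
  match n with
  | O => Mobius 1 0 0 1
  | S m => mob_step (w (S m)) (fcomp_mobius w m)
  end.

Definition mob_admissible (M : mobius) : Prop :=
  0 <= mob_a M /\ 0 <= mob_b M /\ 0 <= mob_c M /\ 1 <= mob_d M /\ Rabs (mob_det M) = 1.

Lemma mob_denom_ge1 M x : mob_admissible M -> 0 <= x -> 1 <= mob_denom M x.
Proof. intros (Ha & Hb & Hc & Hd & _) Hx; unfold mob_denom; nra. Qed.

Lemma fcomp_mobius_admissible w n :
  mob_admissible (fcomp_mobius w n) /\
  INR n + 1 <= mob_c (fcomp_mobius w n) + mob_d (fcomp_mobius w n).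
Proof.
  induction n as [|m [(Ha & Hb & Hc & Hd & Hdet) Hcd]].
  - unfold mob_admissible, mob_det; simpl; rewrite Rmult_1_l, Rmult_0_l, Rminus_0_r, Rabs_R1; lra.
  - rewrite S_INR; cbn [fcomp_mobius]; unfold mob_admissible, mob_det, mob_step in *.
    destruct (w (S m)); cbn [mob_a mob_b mob_c mob_d]; repeat split; try lra.
    + rewrite <- Hdet, <- Rabs_Ropp; f_equal; ring.
    + rewrite <- Hdet; f_equal; ring.
Qed.

Lemma f1_nonneg b x : 0 <= x -> 0 <= f1 b x.
Proof. intros Hx; unfold f1; destruct b; apply Rdiv_le_0_compat; lra. Qed.

Lemma mob_denom_step b M x : 0 <= x ->
  mob_denom (mob_step b M) x = (1 + x) * mob_denom M (f1 b x).
Proof.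
  intros Hx; unfold mob_denom, mob_step, f1; destruct b; cbn; field; lra.
Qed.

Lemma mob_apply_step b M x : mob_admissible M -> 0 <= x ->
  mob_apply M (f1 b x) = mob_apply (mob_step b M) x.
Proof.
  intros (Ha & Hb & Hc & Hd & _) Hx.
  unfold mob_apply, mob_denom, mob_step, f1; destruct b; cbn; field; split; nra.
Qed.

Lemma fcomp_mobius_apply w n x : 0 <= x ->
  fcomp w n x = mob_apply (fcomp_mobius w n) x.
Proof.
  revert x; induction n as [|m IH]; intros x Hx.
  - unfold mob_apply, mob_denom; simpl; field.
  - cbn [fcomp fcomp_mobius]; rewrite IH by (apply f1_nonneg; exact Hx).
    apply mob_apply_step; [apply fcomp_mobius_admissible | exact Hx].
Qed.

Lemma f1_derivative b x : 0 <= x ->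
  derivable_pt_lim (f1 b) x ((if b then -1 else 1) / (1 + x) ^ 2).
Proof.
  intros Hx; apply is_derive_Reals; unfold f1; destruct b; auto_derive; try lra; field; lra.
Qed.

Lemma fcomp_mobius_derivative w n x : 0 <= x ->
  let M := fcomp_mobius w n in
  derivable_pt_lim (fcomp w n) x (mob_det M / mob_denom M x ^ 2).
Proof.
  revert x; induction n as [|m IH]; intros x Hx; cbv zeta.
  - replace (mob_det _ / _) with 1 by (unfold mob_det, mob_denom; simpl; field).
    apply derivable_pt_lim_id.
  - set (b := w (S m)); set (M := fcomp_mobius w m).
    pose proof (proj1 (fcomp_mobius_admissible w m)) as HM; fold M in HM.
    pose proof (mob_denom_ge1 M (f1 b x) HM (f1_nonneg b x Hx)) as HD.
    change (fcomp w (S m)) with (comp (fcomp w m) (f1 b)).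
    replace (mob_det _ / _) with
      (mob_det M / mob_denom M (f1 b x) ^ 2 * ((if b then -1 else 1) / (1 + x) ^ 2)).
    + exact (derivable_pt_lim_comp _ _ _ _ _ (f1_derivative b x Hx) (IH _ (f1_nonneg b x Hx))).
    + cbn [fcomp_mobius]; fold b M; rewrite mob_denom_step by exact Hx.
      unfold mob_det, mob_step; destruct b; cbn in HD |- *; field; lra.
Qed.

Lemma mob_apply_sub M x y : mob_admissible M -> 0 <= x -> 0 <= y ->
  mob_apply M x - mob_apply M y = mob_det M * (x - y) / (mob_denom M x * mob_denom M y).
Proof.
  intros HM Hx Hy.
  pose proof (mob_denom_ge1 M x HM Hx); pose proof (mob_denom_ge1 M y HM Hy).
  unfold mob_apply, mob_det, mob_denom in *; field; lra.
Qed.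

Definition orbit (beta : R) (n : nat) : R := Nat.iter n T1 beta.

Definition itin_mobius (beta : R) (n : nat) : mobius := fcomp_mobius (omega1 beta) n.

Definition orbit_denom (beta : R) (n : nat) : R := mob_denom (itin_mobius beta n) (orbit beta n).

Lemma T1_range y : 0 <= y <= 1 -> 0 <= T1 y <= 1.
Proof.
  intros Hy; unfold T1; destruct (Rle_dec y (1/2)) as [? | ?%Rnot_le_lt];
    (split; [apply Rdiv_le_0_compat | apply Rle_div_l]; lra).
Qed.

Lemma orbit_range beta n : 0 <= beta <= 1 -> 0 <= orbit beta n <= 1.
Proof. intros Hb; induction n; [exact Hb | apply T1_range, IHn]. Qed.

Lemma f1_omega1_orbit beta m : 0 <= beta <= 1 ->
  f1 (omega1 beta (S m)) (orbit beta (S m)) = orbit beta m.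
Proof.
  intros Hb; pose proof (orbit_range beta m Hb) as Hy.
  unfold omega1; replace (S m - 1)%nat with m by lia.
  change (orbit beta (S m)) with (T1 (orbit beta m)); fold (orbit beta m).
  unfold T1, f1; destruct (Rle_dec (orbit beta m) (1/2)); field; lra.
Qed.

Lemma f_itin_orbit beta n : 0 <= beta <= 1 -> f_itin beta n (orbit beta n) = beta.
Proof.
  intros Hb; unfold f_itin; induction n as [|m IH]; [reflexivity|].
  cbn [fcomp]; rewrite f1_omega1_orbit; assumption.
Qed.

Lemma orbit_denom_S beta m : 0 <= beta <= 1 ->
  orbit_denom beta (S m) = (1 + orbit beta (S m)) * orbit_denom beta m.
Proof.
  intros Hb; unfold orbit_denom, itin_mobius; cbn [fcomp_mobius].
  pose proof (orbit_range beta (S m) Hb).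
  rewrite mob_denom_step, f1_omega1_orbit by (assumption || lra).
  reflexivity.
Qed.

Lemma itin_mobius_admissible beta n :
  mob_admissible (itin_mobius beta n) /\
  INR n + 1 <= mob_c (itin_mobius beta n) + mob_d (itin_mobius beta n).
Proof. apply fcomp_mobius_admissible. Qed.

Lemma orbit_denom_bounds beta n : 0 <= beta <= 1 ->
  1 <= orbit_denom beta n /\ (INR n + 1) * orbit beta n <= orbit_denom beta n.
Proof.
  intros Hb; pose proof (orbit_range beta n Hb).
  destruct (itin_mobius_admissible beta n) as [(Ha & Hb' & Hc & Hd & _) Hcd].
  unfold orbit_denom, mob_denom; split; nra.
Qed.

Lemma f_itin_sub_beta beta n x : 0 <= beta <= 1 -> 0 <= x ->
  f_itin beta n x - beta =
  mob_det (itin_mobius beta n) * (x - orbit beta n)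
  / (mob_denom (itin_mobius beta n) x * orbit_denom beta n).
Proof.
  intros Hb Hx; pose proof (orbit_range beta n Hb).
  rewrite <- (f_itin_orbit beta n Hb) at 2; unfold f_itin.
  rewrite !fcomp_mobius_apply by lra.
  apply mob_apply_sub; [apply itin_mobius_admissible | lra | lra].
Qed.

Lemma A_set_log_bound alpha beta eta n x :
  0 < eta -> 0 <= beta <= 1 -> 1 < INR n -> 0 < x -> x <> orbit beta n ->
  A_set alpha beta eta n x ->
  let M := itin_mobius beta n in
  (2 - alpha) * ln (mob_denom M x) + alpha * ln (Rabs (x - orbit beta n))
  < ln (ln (INR n)) - ln eta + alpha * ln (orbit_denom beta n).
Proof.
  intros Heta Hb Hn Hx Nxy [_ HA] M.
  destruct (itin_mobius_admissible beta n) as [HM _]; fold M in HM.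
  pose proof (mob_denom_ge1 M x HM ltac:(lra)) as Ht.
  pose proof (orbit_denom_bounds beta n Hb) as [HD _].
  pose proof (f_itin_sub_beta beta n x Hb ltac:(lra)) as Hsub; fold M in Hsub.
  assert (Hdet : Rabs (mob_det M) = 1) by apply HM.
  set (y := orbit beta n) in *; set (t := mob_denom M x) in *; set (D := orbit_denom beta n) in *.
  assert (Hu : 0 < Rabs (x - y)) by (apply Rabs_pos_lt; lra).
  assert (Hdist : Rabs (f_itin beta n x - beta) = Rabs (x - y) / (t * D)).
  { rewrite Hsub, Rabs_div, Rabs_mult, Hdet, Rmult_1_l, (Rabs_pos_eq (t * D)) by nra; reflexivity. }
  destruct HA as [Hfix | (d & Hder & Hgt)].
  - rewrite Hfix, Rminus_diag, Rabs_R0 in Hdist.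
    assert (0 < Rabs (x - y) / (t * D)) by (apply Rdiv_lt_0_compat; nra); lra.
  - assert (Hd : d = mob_det M / t ^ 2)
      by (eapply uniqueness_limite; [exact Hder | apply fcomp_mobius_derivative; lra]).
    assert (Habsd : Rabs d = / t ^ 2).
    { rewrite Hd, Rabs_div, Hdet, Rabs_pos_eq by nra; field; lra. }
    rewrite Habsd, Hdist in Hgt; unfold Rpower in Hgt.
    assert (HL : 0 < ln (INR n)) by (rewrite <- ln_1; apply ln_increasing; lra).
    apply ln_increasing in Hgt; [|lra].
    rewrite !ln_mult, ln_exp, ln_Rinv, ln_pow, ln_div, ln_mult in Hgt by
      (try apply Rmult_lt_0_compat; try apply Rinv_0_lt_compat; try apply exp_pos;
       try apply Rdiv_lt_0_compat; try apply pow_lt; nra).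
    simpl INR in Hgt; lra.
Qed.

Lemma ln_mult_le a b c e : 0 < a -> 0 < b -> 0 < c -> 0 < e ->
  a * b <= c * e -> ln a + ln b <= ln c + ln e.
Proof.
  intros Ha Hb Hc He H; rewrite <- !ln_mult by assumption.
  apply ln_le; [apply Rmult_lt_0_compat |]; assumption.
Qed.

(* Used with [K = ln (ln n) - ln eta], [c x + d] the denominator of [f_itin beta n] at [x]
   and [y] the orbit point [y_n]. *)
Lemma log_bound_dichotomy al K c d x y :
  0 < al < 1 -> 0 <= c -> 1 <= d -> 0 < x <= 1 -> 0 <= y -> x <> y ->
  (2 - al) * ln (c * x + d) + al * ln (Rabs (x - y)) < K + al * ln (c * y + d) ->
  (2 - al) * ln x + (2 - 2 * al) * ln (c + d) < K + al * ln 2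
  \/ (x < 2 * y /\
      Rabs (x - y) < exp ((K + (2 - al) * ln 2 - (2 - 2 * al) * ln (c * y + d)) / al)).
Proof.
  intros Hal Hc Hd Hx Hy Hxy H.
  set (t := c * x + d) in *; set (D := c * y + d) in *; set (u := Rabs (x - y)) in *.
  assert (Ht : 1 <= t) by (unfold t; nra).
  assert (HD : 1 <= D) by (unfold D; nra).
  assert (Hu : 0 < u) by (apply Rabs_pos_lt; lra).
  assert (Hfar : D * x <= (2 * t) * u ->
    (2 - al) * ln x + (2 - 2 * al) * ln (c + d) < K + al * ln 2).
  { intros Hratio.
    assert (HR : ln D + ln x <= ln (2 * t) + ln u) by (apply ln_mult_le; lra).
    assert (Hct : ln (c + d) + ln x <= ln t + ln 1) by (apply ln_mult_le; unfold t; nra).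
    rewrite ln_mult, ln_1 in * by lra.
    pose proof (Rmult_le_compat_l al _ _ ltac:(lra) HR).
    pose proof (Rmult_le_compat_l (2 - 2 * al) _ _ ltac:(lra) Hct).
    lra. }
  destruct (Rlt_dec x (2 * y)) as [Hlt | Hge%Rnot_lt_le];
    [destruct (Rlt_dec y (2 * x)) as [Hnear | Hle%Rnot_lt_le] |].
  - right; split; [exact Hlt |].
    assert (HDt : ln D + ln 1 <= ln 2 + ln t) by (apply ln_mult_le; unfold D, t in *; nra).
    rewrite ln_1 in HDt.
    pose proof (Rmult_le_compat_l (2 - al) _ _ ltac:(lra) HDt).
    rewrite <- (exp_ln u) by exact Hu; apply exp_increasing, Rlt_div_r; lra.
  - left; apply Hfar; unfold u; rewrite Rabs_left1 by lra.
    assert (D * x <= t * y) by (unfold D, t; nra); nra.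
  - left; apply Hfar; unfold u; rewrite Rabs_pos_eq by lra.
    assert (D <= t) by (unfold D, t; nra); nra.
Qed.

Definition radius (alpha eta beta : R) (n : nat) : R :=
  exp ((ln (ln (INR n)) - ln eta + (2 - alpha) * ln 2
        - (2 - 2 * alpha) * ln (orbit_denom beta n)) / alpha).

Lemma A_set_dichotomy alpha beta eta n x :
  0 < alpha < 1 -> 0 < eta -> 0 <= beta <= 1 -> 1 < INR n -> 0 < x ->
  A_set alpha beta eta n x ->
  (2 - alpha) * ln x + (2 - 2 * alpha) * ln (INR n + 1) < ln (ln (INR n)) - ln eta + alpha * ln 2
  \/ (x < 2 * orbit beta n /\ Rabs (x - orbit beta n) < radius alpha eta beta n).
Proof.
  intros Hal Heta Hb Hn Hx HA.
  pose proof (proj1 HA) as Hx1.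
  pose proof (orbit_range beta n Hb) as Hy.
  destruct (itin_mobius_admissible beta n) as [(_ & _ & Hc & Hd & _) Hcd].
  destruct (Req_dec x (orbit beta n)) as [Exy | Nxy].
  - right; rewrite <- Exy, Rminus_diag, Rabs_R0; split; [lra | apply exp_pos].
  - pose proof (A_set_log_bound alpha beta eta n x Heta Hb Hn Hx Nxy HA) as Hlog.
    destruct (log_bound_dichotomy alpha (ln (ln (INR n)) - ln eta) _ _ x (orbit beta n)
                Hal Hc Hd ltac:(lra) ltac:(lra) Nxy Hlog) as [Hfar | Hnear].
    + left.
      assert (Hln : ln (INR n + 1)
                    <= ln (mob_c (itin_mobius beta n) + mob_d (itin_mobius beta n)))
        by (apply ln_le; lra).
      pose proof (Rmult_le_compat_l (2 - 2 * alpha) _ _ ltac:(lra) Hln); lra.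
    + right; exact Hnear.
Qed.

Lemma ln_le_affine delta L : 0 < delta -> 0 < L -> ln L <= delta * L - 1 - ln delta.
Proof.
  intros Hd HL; pose proof (exp_ineq1_le (ln (delta * L))) as H.
  rewrite exp_ln, ln_mult in H by nra; lra.
Qed.

Lemma log_dominated_by_linear A B C : 0 <= A -> 0 < B ->
  exists L0, forall L, 0 < L -> L0 <= L -> A * ln L - B * L + C <= 0.
Proof.
  intros HA HB.
  set (delta := B / (2 * (A + 1))).
  assert (Hdelta : 0 < delta) by (apply Rdiv_lt_0_compat; lra).
  assert (HAdelta : A * delta <= B / 2).
  { unfold delta; rewrite Rmult_div_assoc; apply Rle_div_l; lra. }
  exists (2 * (A * (- 1 - ln delta) + C) / B); intros L HL HL0.
  apply Rle_div_l in HL0; [|lra].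
  pose proof (Rmult_le_compat_l A _ _ HA (ln_le_affine delta L Hdelta HL)).
  pose proof (Rmult_le_compat_r L _ _ ltac:(lra) HAdelta).
  nra.
Qed.

Lemma eventually_loglog_dominated A B C : 0 <= A -> 0 < B ->
  exists N, forall n, (N <= n)%nat -> A * ln (ln (INR n)) - B * ln (INR n + 1) + C <= 0.
Proof.
  intros HA HB.
  destruct (log_dominated_by_linear A B C HA HB) as [L0 HL0].
  destruct (INR_unbounded (exp L0)) as [N HN].
  exists (Nat.max N 2); intros n Hn.
  assert (H2 : 2 <= INR n) by (apply (le_INR 2); lia).
  assert (HNn : INR N <= INR n) by (apply le_INR; lia).
  assert (Hlnn : 0 < ln (INR n)) by (rewrite <- ln_1; apply ln_increasing; lra).
  assert (Hln1 : ln (INR n) <= ln (INR n + 1)) by (apply ln_le; lra).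
  assert (HL : L0 <= ln (INR n)).
  { rewrite <- (ln_exp L0); apply ln_le; [apply exp_pos | lra]. }
  pose proof (HL0 _ Hlnn HL).
  pose proof (Rmult_le_compat_l B _ _ ltac:(lra) Hln1).
  lra.
Qed.

Lemma half_le_ln_1p y : 0 <= y <= 1 -> y / 2 <= ln (1 + y).
Proof.
  intros Hy; pose proof (exp_ineq1_le (- ln (1 + y))) as H.
  rewrite exp_Ropp, exp_ln in H by lra.
  assert (y / 2 <= 1 - / (1 + y)).
  { replace (1 - / (1 + y)) with (y / (1 + y)) by (field; lra).
    apply Rmult_le_compat_l; [lra | apply Rinv_le_contravar; lra]. }
  lra.
Qed.

Lemma Rpower_1p_ge y e : 0 <= y <= 1 -> 0 < e -> 1 + e * (y / 2) <= Rpower (1 + y) e.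
Proof.
  intros Hy He; unfold Rpower; eapply Rle_trans; [| apply exp_ineq1_le].
  pose proof (Rmult_le_compat_l e _ _ ltac:(lra) (half_le_ln_1p y Hy)); lra.
Qed.

Lemma telescoping_factor y e : 0 <= y <= 1 -> 0 < e ->
  (y + 2 / e) * Rpower (1 + y) (- e) <= 2 / e.
Proof.
  intros Hy He; pose proof (Rpower_1p_ge y e Hy He) as Hq.
  rewrite Rpower_Ropp; set (q := Rpower (1 + y) e) in *.
  assert (Hey : 0 <= e * (y / 2)) by (apply Rmult_le_pos; lra).
  apply Rle_div_l; [lra|].
  assert (H2e : 0 < 2 / e) by (apply Rdiv_lt_0_compat; lra).
  pose proof (Rmult_le_compat_l (2 / e) _ _ (Rlt_le _ _ H2e) Hq).
  replace (2 / e * (1 + e * (y / 2))) with (y + 2 / e) in * by (field; lra).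
  lra.
Qed.

Definition weight (beta e : R) (n : nat) : R :=
  orbit beta n * Rpower (orbit_denom beta n) (- e).

(* [D_(n+1) = (1 + y_(n+1)) D_n] makes [(2/e) D_n^(-e)] a telescoping majorant. *)
Lemma weight_sum_bound beta e : 0 <= beta <= 1 -> 0 < e -> forall N,
  sum_f_R0 (weight beta e) N + 2 / e * Rpower (orbit_denom beta N) (- e) <= 1 + 2 / e.
Proof.
  intros Hb He N; induction N as [|N IH].
  - unfold weight, orbit_denom, itin_mobius, mob_denom, Rpower; simpl.
    rewrite Rmult_0_l, Rplus_0_l, ln_1, Rmult_0_r, exp_0; lra.
  - simpl sum_f_R0; unfold weight at 2.
    pose proof (orbit_range beta (S N) Hb) as Hy.
    pose proof (orbit_denom_bounds beta N Hb) as [HD _].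
    rewrite orbit_denom_S, <- Rpower_mult_distr by lra.
    pose proof (telescoping_factor (orbit beta (S N)) e Hy He) as Hfactor.
    assert (HP : 0 <= Rpower (orbit_denom beta N) (- e)) by (left; apply exp_pos).
    pose proof (Rmult_le_compat_r _ _ _ HP Hfactor).
    lra.
Qed.

Lemma exp_le x y : x <= y -> exp x <= exp y.
Proof. intros [Hlt | ->]; [apply Rlt_le, exp_increasing |]; lra. Qed.

Lemma far_case_eventually_false alpha eta x : 0 < alpha < 1 -> 0 < x ->
  exists N, forall n, (N <= n)%nat ->
  ln (ln (INR n)) - ln eta + alpha * ln 2 <= (2 - alpha) * ln x + (2 - 2 * alpha) * ln (INR n + 1).
Proof.
  intros Hal Hx.
  destruct (eventually_loglog_dominated 1 (2 - 2 * alpha)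
              (- ln eta + alpha * ln 2 - (2 - alpha) * ln x) ltac:(lra) ltac:(lra)) as [N HN].
  exists N; intros n Hn; specialize (HN n Hn); lra.
Qed.

Lemma radius_cost_eventually alpha beta eta s K x :
  0 < alpha < 1 -> 0 <= beta <= 1 -> 0 < s -> 0 < K -> 0 < x ->
  exists N, forall n, (N <= n)%nat -> x < 2 * orbit beta n ->
  Rpower (2 * radius alpha eta beta n) s <= K * weight beta (s * (1 - alpha) / alpha) n.
Proof.
  intros Hal Hb Hs HK Hx.
  set (e := s * (1 - alpha) / alpha).
  assert (He : 0 < e) by (apply Rdiv_lt_0_compat; nra).
  destruct (eventually_loglog_dominated (s / alpha) e
              (s * ln 2 + s / alpha * (- ln eta + (2 - alpha) * ln 2)
               - (1 + e) * ln (x / 2) - ln K))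
    as [N HN]; [apply Rlt_le, Rdiv_lt_0_compat; lra | exact He |].
  exists N; intros n Hn Hxy; specialize (HN n Hn).
  pose proof (orbit_denom_bounds beta n Hb) as [HD HDy].
  assert (Hx2 : 0 < x / 2) by lra.
  assert (Hy : ln (x / 2) <= ln (orbit beta n)) by (apply ln_le; lra).
  assert (HDx : ln (INR n + 1) + ln (x / 2) <= ln (orbit_denom beta n)).
  { pose proof (pos_INR n).
    rewrite <- ln_mult by lra; apply ln_le; nra. }
  pose proof (Rmult_le_compat_l e _ _ (Rlt_le _ _ He) HDx).
  unfold weight, radius, Rpower; fold e.
  rewrite ln_mult, ln_exp by (lra || apply exp_pos).
  rewrite <- (exp_ln K) at 1 by exact HK.
  rewrite <- (exp_ln (orbit beta n)) at 1 by lra.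
  rewrite <- !exp_plus; apply exp_le.
  match goal with |- s * (ln 2 + ?Q / alpha) <= _ =>
    replace (s * (ln 2 + Q / alpha)) with
      (s * ln 2 + s / alpha * (ln (ln (INR n)) - ln eta + (2 - alpha) * ln 2)
       - 2 * e * ln (orbit_denom beta n)) by (unfold e; field; lra) end.
  lra.
Qed.

Lemma interval_is_diam c r : 0 <= r -> is_diam (fun z => Rabs (z - c) <= r) (2 * r).
Proof.
  intros Hr; split; [lra | split].
  - intros x y Hx Hy.
    replace (x - y) with ((x - c) + (c - y)) by ring.
    pose proof (Rabs_triang (x - c) (c - y)); rewrite (Rabs_minus_sym c y) in *; lra.
  - intros d' _ Hd'.
    specialize (Hd' (c + r) (c - r)).
    replace (c + r - c) with r in Hd' by ring; replace (c - r - c) with (- r) in Hd' by ring.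
    replace (c + r - (c - r)) with (2 * r) in Hd' by ring.
    rewrite Rabs_Ropp, !Rabs_pos_eq in Hd' by lra; lra.
Qed.

Lemma hausdorff_null_of_interval_covers s E :
  (forall eps, 0 < eps -> exists c r : nat -> R,
     (forall n, 0 <= r n) /\
     (forall x, E x -> exists n, Rabs (x - c n) <= r n) /\
     (forall N, sum_f_R0 (fun n => rpow (2 * r n) s) N <= eps)) ->
  hausdorff_null s E.
Proof.
  intros Hcov eps Heps; destruct (Hcov eps Heps) as (c & r & Hr & HE & Hsum).
  exists (fun n z => Rabs (z - c n) <= r n), (fun n => 2 * r n).
  split; [intros n; apply interval_is_diam, Hr | split; assumption].
Qed.

Lemma radius_pos alpha eta beta n : 0 < radius alpha eta beta n.
Proof. apply exp_pos. Qed.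

Lemma rpow_0_l s : s <> 0 -> rpow 0 s = 0.
Proof. intros Hs; unfold rpow; destruct Req_EM_T; [destruct Req_EM_T |]; lra. Qed.

Lemma rpow_Rpower d s : d <> 0 -> rpow d s = Rpower d s.
Proof. intros Hd; unfold rpow; destruct Req_EM_T; [contradiction | reflexivity]. Qed.

Lemma limsup_A_set_near_cheap_orbit alpha beta eta s K x :
  0 < alpha < 1 -> 0 <= beta <= 1 -> 0 < eta -> 0 < s -> 0 < K -> 0 < x ->
  limsup_set (A_set alpha beta eta) x ->
  exists n, Rabs (x - orbit beta n) <= radius alpha eta beta n /\
    Rpower (2 * radius alpha eta beta n) s <= K * weight beta (s * (1 - alpha) / alpha) n.
Proof.
  intros Hal Hb Heta Hs HK Hx Hlimsup.
  destruct (far_case_eventually_false alpha eta x Hal Hx) as [N1 HN1].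
  destruct (radius_cost_eventually alpha beta eta s K x Hal Hb Hs HK Hx) as [N2 HN2].
  destruct (Hlimsup (Nat.max 2 (Nat.max N1 N2))) as (n & Hn & HA).
  assert (Hn1 : 1 < INR n) by (apply (lt_INR 1); lia).
  destruct (A_set_dichotomy alpha beta eta n x Hal Heta Hb Hn1 Hx HA) as [Hfar | [Hxy Hnear]].
  - specialize (HN1 n ltac:(lia)); lra.
  - exists n; split; [lra | apply HN2; [lia | exact Hxy]].
Qed.

(* The point [0], where the estimates degenerate, gets its own zero-radius interval. *)
Lemma limsup_A_set_hausdorff_null alpha beta eta s :
  0 < alpha < 1 -> 0 <= beta <= 1 -> 0 < eta -> 0 < s ->
  hausdorff_null s (limsup_set (A_set alpha beta eta)).
Proof.
  intros Hal Hb Heta Hs; apply hausdorff_null_of_interval_covers; intros eps Heps.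
  set (e := s * (1 - alpha) / alpha).
  assert (He : 0 < e) by (apply Rdiv_lt_0_compat; nra).
  assert (H2e : 0 < 2 / e) by (apply Rdiv_lt_0_compat; lra).
  set (K := eps / (1 + 2 / e)).
  assert (HK : 0 < K) by (apply Rdiv_lt_0_compat; lra).
  set (kept n := Rle_dec (Rpower (2 * radius alpha eta beta n) s) (K * weight beta e n)).
  set (r i := match i with
              | O => 0
              | S n => if kept n then radius alpha eta beta n else 0
              end).
  assert (Hcost : forall n, rpow (2 * r (S n)) s <= K * weight beta e n).
  { intros n; pose proof (orbit_range beta n Hb); pose proof (radius_pos alpha eta beta n).
    unfold r; destruct (kept n) as [Hk | _].
    - rewrite rpow_Rpower by lra; exact Hk.
    - rewrite Rmult_0_r, rpow_0_l by lra.
      apply Rmult_le_pos; [lra | apply Rmult_le_pos; [lra | apply Rlt_le, exp_pos]]. }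
  exists (fun i => match i with O => 0 | S n => orbit beta n end), r.
  split; [| split].
  - intros [|n]; simpl; [lra | destruct (kept n); [apply Rlt_le, radius_pos | lra]].
  - intros x Hx.
    destruct (Hx 0%nat) as (_ & _ & Hx01 & _).
    destruct (Req_dec x 0) as [-> | Hx0].
    { exists 0%nat; simpl; rewrite Rminus_0_r, Rabs_R0; lra. }
    destruct (limsup_A_set_near_cheap_orbit alpha beta eta s K x Hal Hb Heta Hs HK
                ltac:(lra) Hx) as (n & Hnear & Hcheap).
    exists (S n); simpl; destruct (kept n) as [_ | Hk]; [exact Hnear | contradiction].
  - intros [|N]; [simpl; rewrite Rmult_0_r, rpow_0_l; lra |].
    rewrite decomp_sum by lia; simpl pred.
    replace (r 0%nat) with 0 by reflexivity; rewrite Rmult_0_r, rpow_0_l, Rplus_0_l by lra.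
    apply Rle_trans with (K * sum_f_R0 (weight beta e) N).
    { rewrite scal_sum; apply sum_Rle; intros n _.
      rewrite (Rmult_comm (weight beta e n)); apply Hcost. }
    pose proof (weight_sum_bound beta e Hb He N).
    assert (0 <= 2 / e * Rpower (orbit_denom beta N) (- e))
      by (apply Rmult_le_pos; [lra | apply Rlt_le, exp_pos]).
    apply Rle_trans with (K * (1 + 2 / e)); [apply Rmult_le_compat_l; lra |].
    unfold K; right; field; lra.
Qed.

Theorem lemma4p18 (alpha beta eta : R)
  (halpha : 0 < alpha < 1) (hbeta : 0 <= beta <= 1) (hirr : irrational beta)
  (heta : 0 < eta) :
  hausdorff_dim_is (limsup_set (A_set alpha beta eta)) 0.
Proof.
  split.
  - intros s Hs _; exact Hs.
  - intros D HD; apply Rnot_lt_le; intros HDpos.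
    assert (Hnull := limsup_A_set_hausdorff_null alpha beta eta (D / 2) halpha hbeta heta
                       ltac:(lra)).
    specialize (HD (D / 2) ltac:(lra) Hnull); lra.
Qed.
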